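(* Let $(M,d)$ be a bounded metric space with metric normal structure such that $\mathcal A(M)$ is compact. Let $(T_i)_{i\in I}$ be a family of orbit-nonexpansive self-mappings of $M$ which commute pairwise ($T_i\circ T_j=T_j\circ T_i$ for all $i,j\in I$). Then there is $x\in M$ with $T_ix=x$ for all $i\in I$, and the set of common fixed points of the family is a one-local retract of $M$.
   Context: For a metric space $(M,d)$, a mapping $T:M\to M$ and $x\in M$, the orbit of $x$ is $o_T(x)=\{x\}\cup\{T^nx:n\in\mathbb N\}$. For $x\in M$ and bounded $A\subseteq M$, $D(x,A)=\sup\{d(x,a):a\in A\}$ and $\delta(A)=\sup\{d(x,y):x,y\in A\}$. A mapping $T:M\to M$ is orbit-nonexpansive if $d(Tx,Ty)\le D(x,o_T(y))$ for all $x,y\in M$. A subset of $M$ is admissible if it is an intersection of closed balls of $M$; $\mathcal A(M)$ denotes the family of admissible sets. $\mathcal A(M)$ is compact if every subfamily of $\mathcal A(M)$ all of whose finite intersections are nonempty has nonempty intersection. $(M,d)$ has metric normal structure if for every admissible set $A$ with more than one point there exists $z_A\in A$ with $D(z_A,A)<\delta(A)$. A subset $E\subseteq M$ is a one-local retract of $M$ if for every family of closed balls with centers in $E$ having nonempty intersection, that intersection meets $E$. *)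

From Stdlib Require Import Reals List.
From Coquelicot Require Import Coquelicot.
Open Scope R_scope.

Definition is_metric {M : Type} (d : M -> M -> R) : Prop :=
  (forall x y, 0 <= d x y) /\
  (forall x y, d x y = 0 <-> x = y) /\
  (forall x y, d x y = d y x) /\
  (forall x y z, d x z <= d x y + d y z).

Definition bounded_metric {M : Type} (d : M -> M -> R) : Prop :=
  exists B : R, forall x y, d x y <= B.

Definition Dist {M : Type} (d : M -> M -> R) (x : M) (A : M -> Prop) : Rbar :=
  Lub_Rbar (fun r => exists a, A a /\ r = d x a).

Definition diam {M : Type} (d : M -> M -> R) (A : M -> Prop) : Rbar :=
  Lub_Rbar (fun r => exists x y, A x /\ A y /\ r = d x y).

Definition orbit {M : Type} (T : M -> M) (x : M) : M -> Prop :=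
  fun y => y = x \/ exists n : nat, y = Nat.iter n T x.

Definition orbit_nonexpansive {M : Type} (d : M -> M -> R) (T : M -> M) : Prop :=
  forall x y, Rbar_le (Finite (d (T x) (T y))) (Dist d x (orbit T y)).

Definition cball {M : Type} (d : M -> M -> R) (c : M) (r : R) : M -> Prop :=
  fun y => d c y <= r.

Definition ball_family {M : Type} (F : M -> R -> Prop) : Prop :=
  forall c r, F c r -> 0 <= r.

Definition inter_balls {M : Type} (d : M -> M -> R) (F : M -> R -> Prop) : M -> Prop :=
  fun x => forall c r, F c r -> cball d c r x.

Definition admissible {M : Type} (d : M -> M -> R) (A : M -> Prop) : Prop :=
  exists F : M -> R -> Prop, ball_family F /\
    forall x, A x <-> inter_balls d F x.

Definition admissible_compact {M : Type} (d : M -> M -> R) : Prop :=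
  forall Fam : (M -> Prop) -> Prop,
    (forall A, Fam A -> admissible d A) ->
    (forall l : list (M -> Prop), (forall A, In A l -> Fam A) ->
        exists x, forall A, In A l -> A x) ->
    exists x, forall A, Fam A -> A x.

Definition has_more_than_one_point {M : Type} (A : M -> Prop) : Prop :=
  exists x y, A x /\ A y /\ x <> y.

Definition metric_normal_structure {M : Type} (d : M -> M -> R) : Prop :=
  forall A, admissible d A -> has_more_than_one_point A ->
    exists z, A z /\ Rbar_lt (Dist d z A) (diam d A).

Definition one_local_retract {M : Type} (d : M -> M -> R) (E : M -> Prop) : Prop :=
  forall F : M -> R -> Prop, ball_family F ->
    (forall c r, F c r -> E c) ->
    (exists x, inter_balls d F x) ->
    exists e, E e /\ inter_balls d F e.

(* Call E ⊆ A0 a one-local retract of A0 if every family of balls centred in E whose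
   intersection meets A0 also meets E. Compactness of the admissible sets makes the
   intersection of a chain of such retracts again a retract, so Zorn's lemma gives a minimal
   retract of an invariant admissible set A0 that is invariant under all the T_i.
   For a single orbit-nonexpansive T and a T-invariant retract E, a minimal nonempty
   T-invariant set of the form E ∩ (balls centred in E) must be a point: otherwise normal
   structure provides a radius r smaller than its diameter, and orbit-nonexpansiveness
   shows that the points lying within r of the whole set form a smaller such set.
   Hence Fix(T) ∩ E is again a retract of A0, and by commutativity it is T_j-invariant,
   so the minimal retract consists of common fixed points. *)

From Stdlib Require Import Reals List Lra Classical.
From Coquelicot Require Import Coquelicot.
From mathcomp Require boolp classical_sets.
Open Scope R_scope.

Definition included {M : Type} (A B : M -> Prop) : Prop := forall x, A x -> B x.

Definition bigcap {M : Type} (C : (M -> Prop) -> Prop) : M -> Prop :=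
  fun x => forall A, C A -> A x.

Definition chain {M : Type} (C : (M -> Prop) -> Prop) : Prop :=
  forall A B, C A -> C B -> included A B \/ included B A.

Definition invariant {M : Type} (T : M -> M) (S : M -> Prop) : Prop :=
  forall y, S y -> S (T y).

Lemma zorn_minimal {M : Type} (P : (M -> Prop) -> Prop) (X0 : M -> Prop) :
  P X0 ->
  (forall C, (forall A, C A -> P A) -> (exists A, C A) -> chain C -> P (bigcap C)) ->
  exists X, P X /\ forall Y, P Y -> included Y X -> included X Y.
Proof.
  intros PX0 Hchain.
  set (le := fun a b : {A | P A} => boolp.asbool (included (proj1_sig b) (proj1_sig a))).
  destruct (@classical_sets.ZL_preorder _ (exist _ X0 PX0) le) as [[X PX] Xmax].
  - intros t. apply boolp.asboolT. intros x h; exact h.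
  - intros r s t Hrs Hst. apply boolp.asboolT.
    apply boolp.asboolW in Hrs, Hst. intros x h; exact (Hrs x (Hst x h)).
  - intros A Atot.
    destruct (classic (exists s, A s)) as [[s0 As0] | Aempty].
    + set (C := fun X => exists s, A s /\ proj1_sig s = X).
      assert (PC : P (bigcap C)).
      { apply Hchain.
        - intros X [s [_ <-]]. exact (proj2_sig s).
        - exists (proj1_sig s0), s0. auto.
        - intros X Y [s [As <-]] [t [At <-]].
          destruct (Atot s t As At) as [h | h]; apply boolp.asboolW in h; auto. }
      exists (exist _ _ PC). intros s As. apply boolp.asboolT.
      intros x Hx. apply Hx. exists s. auto.
    + exists (exist _ X0 PX0). intros s As. exfalso. eauto.
  - exists X. split; [exact PX |]. intros Y PY YX.
    apply boolp.asboolW, (Xmax (exist _ Y PY)), boolp.asboolT, YX.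
Qed.

Lemma chain_list_lower_bound {M : Type} (C : (M -> Prop) -> Prop) :
  chain C -> (exists A, C A) ->
  forall l, (forall A, In A l -> C A) ->
  exists B, C B /\ forall A, In A l -> included B A.
Proof.
  intros Hchain [A0 CA0] l. induction l as [| A l IH]; intros Hl.
  - exists A0. split; [exact CA0 | intros A []].
  - destruct IH as [B [CB HB]]; [intros X HX; apply Hl; now right |].
    assert (CA : C A) by (apply Hl; now left).
    destruct (Hchain A B CA CB) as [AB | BA].
    + exists A. split; [exact CA |].
      intros X [<- | HX]; [intros x h; exact h |].
      intros x h. exact (HB X HX x (AB x h)).
    + exists B. split; [exact CB |]. intros X [<- | HX]; auto.
Qed.

Section Hulls.
Context {M : Type} (d : M -> M -> R).

Definition hull_balls (E S : M -> Prop) : M -> R -> Prop :=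
  fun c r => E c /\ 0 <= r /\ forall s, S s -> E s -> d c s <= r.

Definition hull (E S : M -> Prop) : M -> Prop := inter_balls d (hull_balls E S).

(* [S] meets [E] in the trace of an intersection of balls centred in [E]; for [E] the whole
   space these are exactly the admissible sets. *)
Definition admissible_in (E S : M -> Prop) : Prop := forall y, E y -> hull E S y -> S y.

Lemma ball_family_hull_balls E S : ball_family (hull_balls E S).
Proof. intros c r [_ [r_ge0 _]]. exact r_ge0. Qed.

Lemma hull_subset E S y : S y -> E y -> hull E S y.
Proof. intros Sy Ey c r [_ [_ HS]]. exact (HS y Sy Ey). Qed.

Lemma hull_mono E S S' : included S S' -> included (hull E S) (hull E S').
Proof.
  intros SS' y Hy c r [Ec [r_ge0 HS']]. apply Hy.
  split; [exact Ec | split; [exact r_ge0 |]].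
  intros s Ss Es. exact (HS' s (SS' s Ss) Es).
Qed.

Lemma hull_min E S H :
  (forall c r, H c r -> E c /\ 0 <= r) ->
  (forall y, S y -> E y -> inter_balls d H y) ->
  included (hull E S) (inter_balls d H).
Proof.
  intros centres HS y Hy c r Hcr. destruct (centres c r Hcr) as [Ec r_ge0].
  apply Hy. split; [exact Ec | split; [exact r_ge0 |]].
  intros s Ss Es. exact (HS s Ss Es c r Hcr).
Qed.

Lemma admissible_in_balls E H :
  ball_family H -> (forall c r, H c r -> E c) -> admissible_in E (inter_balls d H).
Proof.
  intros Hfam centres y _. apply hull_min; [| intros s Hs _; exact Hs].
  intros c r Hcr. split; [exact (centres c r Hcr) | exact (Hfam c r Hcr)].
Qed.

Lemma admissible_in_bigcap E C :
  (forall A, C A -> admissible_in E A) -> admissible_in E (bigcap C).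
Proof.
  intros HC y Ey Hy A CA. apply (HC A CA y Ey).
  apply (hull_mono E (bigcap C)); [intros x h; exact (h A CA) | exact Hy].
Qed.

Lemma admissible_in_inter E A B :
  admissible_in E A -> admissible_in E B -> admissible_in E (fun x => A x /\ B x).
Proof.
  intros HA HB y Ey Hy. split.
  - apply (HA y Ey). apply (hull_mono E (fun x => A x /\ B x)); [now intros x [] | exact Hy].
  - apply (HB y Ey). apply (hull_mono E (fun x => A x /\ B x)); [now intros x [] | exact Hy].
Qed.

Lemma admissible_in_trace E S S' :
  (forall y, E y -> (S y <-> S' y)) -> admissible_in E S -> admissible_in E S'.
Proof.
  intros SS' HS y Ey Hy. apply (SS' y Ey), (HS y Ey).
  intros c r [Ec [r_ge0 Hc]]. apply Hy. split; [exact Ec | split; [exact r_ge0 |]].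
  intros s S's Es. exact (Hc s (proj2 (SS' s Es) S's) Es).
Qed.

Lemma admissible_inter_balls G :
  ball_family G -> admissible_in (fun _ => True) (inter_balls d G).
Proof. intros Gfam. apply admissible_in_balls; [exact Gfam | intros; exact I]. Qed.

Lemma admissible_hull E S : admissible_in (fun _ => True) (hull E S).
Proof. apply admissible_inter_balls, ball_family_hull_balls. Qed.

Lemma admissible_of_admissible_in A :
  admissible_in (fun _ => True) A -> admissible d A.
Proof.
  intros HA. exists (hull_balls (fun _ => True) A).
  split; [apply ball_family_hull_balls |].
  intros x. split; [intros Ax; exact (hull_subset _ _ _ Ax I) | exact (HA x I)].
Qed.

Lemma inter_balls_or G H y :
  inter_balls d (fun c r => G c r \/ H c r) y <-> inter_balls d G y /\ inter_balls d H y.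
Proof.
  split.
  - intros Hy. split; intros c r Hcr; apply Hy; auto.
  - intros [HG HH] c r [Hcr | Hcr]; auto.
Qed.

End Hulls.

Section Orbits.
Context {M : Type} (d : M -> M -> R) (T : M -> M).

Lemma orbit_included S y z : invariant T S -> S y -> orbit T y z -> S z.
Proof.
  intros TS Sy [-> | [n ->]]; [exact Sy |].
  induction n as [| n IH]; [exact Sy | exact (TS _ IH)].
Qed.

Lemma orbit_of_fixed_point c z : T c = c -> orbit T c z -> z = c.
Proof.
  intros Tc [-> | [n ->]]; [reflexivity |].
  induction n as [| n IH]; [reflexivity | simpl; rewrite IH; exact Tc].
Qed.

Lemma orbit_nonexpansive_le x y r :
  orbit_nonexpansive d T -> (forall z, orbit T y z -> d x z <= r) -> d (T x) (T y) <= r.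
Proof.
  intros HT Hr. change (Rbar_le (d (T x) (T y)) r). apply (Rbar_le_trans _ _ _ (HT x y)).
  apply (proj2 (Lub_Rbar_correct _)). intros w [z [Hz ->]]. exact (Hr z Hz).
Qed.

Lemma invariant_inter_balls G :
  is_metric d -> orbit_nonexpansive d T -> (forall c r, G c r -> T c = c) ->
  invariant T (inter_balls d G).
Proof.
  intros [_ [_ [dsym _]]] HT Gfixed y Gy c r Gcr. unfold cball.
  rewrite <- (Gfixed c r Gcr) at 1. rewrite dsym.
  apply orbit_nonexpansive_le; [exact HT |].
  intros z Hz. rewrite (orbit_of_fixed_point c z (Gfixed c r Gcr) Hz), dsym. exact (Gy c r Gcr).
Qed.

End Orbits.

Section RelativeRetracts.
Context {M : Type} (d : M -> M -> R).

(* One-local retracts relative to [A0]: [one_local_retract d E] is the case [A0] = [M]. *)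
Definition relative_retract (A0 E : M -> Prop) : Prop :=
  included E A0 /\
  forall G, ball_family G -> (forall c r, G c r -> E c) ->
    (exists x, A0 x /\ inter_balls d G x) -> exists e, E e /\ inter_balls d G e.

Lemma relative_retract_refl A0 : relative_retract A0 A0.
Proof. split; [intros x h; exact h | intros G _ _ Hx; exact Hx]. Qed.

Lemma relative_retract_nonempty A0 E :
  relative_retract A0 E -> (exists x, A0 x) -> exists e, E e.
Proof.
  intros [_ HE] [x A0x]. destruct (HE (fun _ _ => False)) as [e [Ee _]].
  - intros c r [].
  - intros c r [].
  - exists x. split; [exact A0x | intros c r []].
  - exists e. exact Ee.
Qed.

Lemma relative_retract_restrict A0 E G :
  relative_retract A0 E -> ball_family G -> (forall c r, G c r -> E c) ->
  relative_retract (fun x => A0 x /\ inter_balls d G x) (fun x => E x /\ inter_balls d G x).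
Proof.
  intros [EA0 HE] Gfam Gcentres. split; [intros x [Ex Gx]; exact (conj (EA0 x Ex) Gx) |].
  intros H Hfam Hcentres [x [[A0x Gx] Hx]].
  destruct (HE (fun c r => H c r \/ G c r)) as [e [Ee HGe]].
  - intros c r [Hcr | Gcr]; [exact (Hfam c r Hcr) | exact (Gfam c r Gcr)].
  - intros c r [Hcr | Gcr]; [exact (proj1 (Hcentres c r Hcr)) | exact (Gcentres c r Gcr)].
  - exists x. split; [exact A0x | apply inter_balls_or; auto].
  - apply inter_balls_or in HGe. exists e. tauto.
Qed.

End RelativeRetracts.

Lemma compact_nested {M : Type} (d : M -> M -> R) (C : (M -> Prop) -> Prop) :
  admissible_compact d -> chain C -> (exists A, C A) ->
  (forall A, C A -> admissible_in d (fun _ => True) A /\ exists x, A x) ->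
  exists x, bigcap C x.
Proof.
  intros Hcompact Hchain Cne HC. apply Hcompact.
  - intros A CA. exact (admissible_of_admissible_in d A (proj1 (HC A CA))).
  - intros l Hl. destruct (chain_list_lower_bound C Hchain Cne l Hl) as [B [CB HB]].
    destruct (proj2 (HC B CB)) as [x Bx]. exists x. intros A HA. exact (HB A HA x Bx).
Qed.

Lemma normal_structure_radius {M : Type} (d : M -> M -> R) (W : M -> Prop) x y :
  metric_normal_structure d -> admissible_in d (fun _ => True) W ->
  W x -> W y -> x <> y ->
  exists z r, W z /\ (forall w, W w -> d z w <= r) /\ exists x' y', W x' /\ W y' /\ r < d x' y'.
Proof.
  intros Hnormal HW Wx Wy xy.
  destruct (Hnormal W (admissible_of_admissible_in d W HW)) as [z [Wz Hz]].
  { exists x, y. auto. }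
  unfold Dist, diam in Hz.
  destruct (Lub_Rbar_correct (fun r => exists a, W a /\ r = d z a)) as [Hub _].
  revert Hz Hub. generalize (Lub_Rbar (fun r => exists a, W a /\ r = d z a)).
  intros [r | |] Hz Hub.
  - exists z, r. split; [exact Wz | split].
    { intros w Ww. exact (Hub _ (ex_intro _ w (conj Ww eq_refl))). }
    apply NNPP. intros Hsmall. apply (Rbar_lt_not_le _ _ Hz).
    apply (proj2 (Lub_Rbar_correct _)). intros s [x' [y' [Wx' [Wy' ->]]]].
    apply Rnot_lt_le. intros Hlt. apply Hsmall. exists x', y'. auto.
  - contradiction.
  - contradiction (Hub _ (ex_intro _ z (conj Wz eq_refl))).
Qed.

Section Metric.
Context {M : Type} (d : M -> M -> R).
Hypothesis Hd : is_metric d.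

Lemma dist_self x : d x x = 0.
Proof. destruct Hd as [_ [Hzero _]]. exact (proj2 (Hzero x x) eq_refl). Qed.

Lemma dist_sym x y : d x y = d y x.
Proof. destruct Hd as [_ [_ [Hsym _]]]. exact (Hsym x y). Qed.

Lemma hull_diameter_le S r x y :
  0 <= r -> (forall c s, S c -> S s -> d c s <= r) ->
  hull d (fun _ => True) S x -> hull d (fun _ => True) S y -> d x y <= r.
Proof.
  intros r_ge0 HS Hx Hy. apply Hy. split; [exact I | split; [exact r_ge0 |]].
  intros s Ss _. rewrite dist_sym. apply Hx.
  split; [exact I | split; [exact r_ge0 |]]. intros s' Ss' _. exact (HS s s' Ss Ss').
Qed.

End Metric.

Lemma chain_meets_relative_retract {M : Type} (d : M -> M -> R) A0 E C :
  admissible_compact d -> admissible_in d (fun _ => True) A0 -> relative_retract d A0 E ->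
  chain C -> (exists A, C A) ->
  (forall A, C A -> (exists y, A y /\ E y) /\ admissible_in d E A) ->
  exists e, E e /\ bigcap C e.
Proof.
  intros Hcompact HA0 [EA0 HE] Hchain Cne HC.
  set (F := fun A y => A0 y /\ hull d E A y).
  assert (F_mono : forall A B, included A B -> included (F A) (F B)).
  { intros A B AB y [A0y Hy]. split; [exact A0y | exact (hull_mono d E A B AB y Hy)]. }
  (* compactness yields a point of [A0] in every hull; the retract property moves it into [E] *)
  destruct (compact_nested d (fun X => exists A, C A /\ X = F A) Hcompact) as [q Hq].
  - intros X Y [A [CA ->]] [B [CB ->]].
    destruct (Hchain A B CA CB); [left | right]; apply F_mono; assumption.
  - destruct Cne as [A CA]. exists (F A), A. auto.
  - intros X [A [CA ->]]. split.
    + apply admissible_in_inter; [exact HA0 |].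
      exact (admissible_hull d E A).
    + destruct (proj1 (HC A CA)) as [p [Ap Ep]].
      exists p. split; [exact (EA0 p Ep) | exact (hull_subset d E A p Ap Ep)].
  - destruct (HE (fun c r => exists A, C A /\ hull_balls d E A c r)) as [e [Ee He]].
    + intros c r [A [_ Hcr]]. exact (ball_family_hull_balls d E A c r Hcr).
    + intros c r [A [_ [Ec _]]]. exact Ec.
    + destruct Cne as [A CA]. exists q.
      split; [exact (proj1 (Hq (F A) (ex_intro _ A (conj CA eq_refl)))) |].
      intros c r [B [CB Hcr]]. exact (proj2 (Hq (F B) (ex_intro _ B (conj CB eq_refl))) c r Hcr).
    + exists e. split; [exact Ee |]. intros A CA. apply (proj2 (HC A CA) e Ee).
      intros c r Hcr. apply He. exists A. auto.
Qed.

Section FixedPoint.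
Context {M : Type} (d : M -> M -> R).
Hypotheses (Hd : is_metric d) (Hnormal : metric_normal_structure d)
  (Hcompact : admissible_compact d).
Variables (A0 E : M -> Prop) (T : M -> M).
Hypotheses (HA0 : admissible_in d (fun _ => True) A0) (HE : relative_retract d A0 E)
  (HT : orbit_nonexpansive d T) (TE : invariant T E).

Definition invariant_piece (S : M -> Prop) : Prop :=
  (exists y, S y) /\ included S E /\ admissible_in d E S /\ invariant T S.

Lemma invariant_piece_bigcap C :
  (forall S, C S -> invariant_piece S) -> (exists S, C S) -> chain C ->
  invariant_piece (bigcap C).
Proof.
  intros HC [S1 CS1] Hchain.
  split; [| split; [| split]].
  - destruct (chain_meets_relative_retract d A0 E C Hcompact HA0 HE Hchain
      (ex_intro _ S1 CS1)) as [e [_ He]].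
    + intros S CS. destruct (HC S CS) as [[y Sy] [SE [HS _]]].
      split; [exists y; split; [exact Sy | exact (SE y Sy)] | exact HS].
    + exists e. exact He.
  - intros y Hy. exact (proj1 (proj2 (HC S1 CS1)) y (Hy S1 CS1)).
  - apply admissible_in_bigcap. intros S CS. exact (proj1 (proj2 (proj2 (HC S CS)))).
  - intros y Hy S CS. exact (proj2 (proj2 (proj2 (HC S CS))) y (Hy S CS)).
Qed.

Section MinimalPiece.
Variable S : M -> Prop.
Hypotheses (HS : invariant_piece S)
  (Smin : forall Y, invariant_piece Y -> included Y S -> included S Y).

Lemma minimal_piece_absorbs x r :
  S x -> (forall y, S y -> d (T x) (T y) <= r) -> forall y, S y -> d (T x) y <= r.
Proof.
  intros Sx Hx.
  destruct HS as [_ [SE [S_adm TS]]].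
  assert (r_ge0 : 0 <= r) by (rewrite <- (dist_self d Hd (T x)); exact (Hx x Sx)).
  assert (HY : invariant_piece (fun y => S y /\ d (T x) y <= r)).
  { split; [| split; [| split]].
    - exists (T x). split; [exact (TS x Sx) | rewrite (dist_self d Hd); exact r_ge0].
    - intros y [Sy _]. exact (SE y Sy).
    - apply admissible_in_inter; [exact S_adm |].
      apply (admissible_in_trace d E (inter_balls d (fun c s => c = T x /\ s = r))).
      + intros y _. split; [intros h; exact (h _ _ (conj eq_refl eq_refl)) |].
        intros h c s [-> ->]. exact h.
      + apply admissible_in_balls; [intros c s [_ ->]; exact r_ge0 |].
        intros c s [-> _]. exact (SE _ (TS x Sx)).
    - intros y [Sy _]. split; [exact (TS y Sy) | exact (Hx y Sy)]. }
  intros y Sy. exact (proj2 (Smin _ HY (fun y h => proj1 h) y Sy)).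
Qed.

(* Normal structure gives a radius [r] below the diameter of the hull of [S]; the points of
   [S] within [r] of all of [S] form an invariant piece, which by minimality is all of [S]. *)
Lemma minimal_piece_singleton x y : S x -> S y -> x = y.
Proof.
  intros Sx Sy. apply NNPP. intros xy.
  destruct HS as [_ [SE [S_adm TS]]].
  set (X := fun w => A0 w /\ hull d (fun _ => True) S w).
  assert (SX : included S X).
  { intros w Sw. split; [exact (proj1 HE w (SE w Sw)) | exact (hull_subset d _ S w Sw I)]. }
  destruct (normal_structure_radius d X x y Hnormal) as [z [r [Xz [Hz [x' [y' [Xx' [Xy' Hr]]]]]]]];
    [ apply admissible_in_inter; [exact HA0 |];
      exact (admissible_hull d (fun _ => True) S)
    | exact (SX x Sx) | exact (SX y Sy) | exact xy |].
  assert (r_ge0 : 0 <= r) by (rewrite <- (dist_self d Hd z); exact (Hz z Xz)).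
  set (balls := fun c s => S c /\ s = r).
  assert (S_small : included S (fun w => S w /\ inter_balls d balls w)).
  { apply Smin; [| intros w [Sw _]; exact Sw].
    split; [| split; [| split]].
    - destruct (proj2 HE (fun c s => hull_balls d E S c s \/ balls c s)) as [e [Ee He]].
      + intros c s [Hcs | [_ ->]]; [exact (ball_family_hull_balls d E S c s Hcs) | exact r_ge0].
      + intros c s [[Ec _] | [Sc _]]; [exact Ec | exact (SE c Sc)].
      + exists z. split; [exact (proj1 Xz) | apply inter_balls_or; split].
        * apply (hull_min d (fun _ => True) S (hull_balls d E S)); [| | exact (proj2 Xz)].
          -- intros c s Hcs. split; [exact I | exact (ball_family_hull_balls d E S c s Hcs)].
          -- intros s Ss _. exact (hull_subset d E S s Ss (SE s Ss)).
        * intros c s [Sc ->]. unfold cball. rewrite dist_sym by exact Hd. exact (Hz c (SX c Sc)).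
      + apply inter_balls_or in He. destruct He as [He_hull He_balls].
        exists e. split; [exact (S_adm e Ee He_hull) | exact He_balls].
    - intros w [Sw _]. exact (SE w Sw).
    - apply admissible_in_inter; [exact S_adm |].
      apply admissible_in_balls; [intros c s [_ ->]; exact r_ge0 |].
      intros c s [Sc _]. exact (SE c Sc).
    - intros w [Sw Hw]. split; [exact (TS w Sw) |].
      intros c s [Sc ->]. unfold cball. rewrite dist_sym by exact Hd.
      apply (minimal_piece_absorbs w r Sw); [| exact Sc].
      intros v Sv. apply orbit_nonexpansive_le; [exact HT |].
      intros u Hu. rewrite dist_sym by exact Hd.
      exact (Hw u r (conj (orbit_included T S v u TS Sv Hu) eq_refl)). }
  assert (Hdiam : d x' y' <= r).
  { apply (hull_diameter_le d Hd S); [exact r_ge0 | | exact (proj2 Xx') | exact (proj2 Xy')].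
    intros c s Sc Ss. exact (proj2 (S_small s Ss) c r (conj Sc eq_refl)). }
  lra.
Qed.

End MinimalPiece.

Lemma relative_retract_fixed_point : (exists e, E e) -> exists e, E e /\ T e = e.
Proof.
  intros Ene.
  destruct (zorn_minimal invariant_piece E) as [S [HS Smin]].
  - split; [exact Ene | split; [intros y h; exact h | split; [intros y Ey _; exact Ey | exact TE]]].
  - intros C HC Cne Hchain. exact (invariant_piece_bigcap C HC Cne Hchain).
  - destruct HS as [[s Ss] [SE [S_adm TS]]].
    exists s. split; [exact (SE s Ss) |].
    exact (minimal_piece_singleton S (conj (ex_intro _ s Ss) (conj SE (conj S_adm TS))) Smin
      (T s) s (TS s Ss) Ss).
Qed.

End FixedPoint.

Lemma relative_retract_fixed_points {M : Type} (d : M -> M -> R) A0 E T :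
  is_metric d -> metric_normal_structure d -> admissible_compact d ->
  admissible_in d (fun _ => True) A0 -> relative_retract d A0 E ->
  orbit_nonexpansive d T -> invariant T E ->
  relative_retract d A0 (fun x => E x /\ T x = x).
Proof.
  intros Hd Hnormal Hcompact HA0 HE HT TE.
  split; [intros x [Ex _]; exact (proj1 HE x Ex) |].
  intros G Gfam Gcentres [x [A0x Gx]].
  assert (Gfixed : forall c r, G c r -> T c = c)
    by (intros c r Gcr; exact (proj2 (Gcentres c r Gcr))).
  assert (HEG := relative_retract_restrict d A0 E G HE Gfam
    (fun c r Gcr => proj1 (Gcentres c r Gcr))).
  destruct (relative_retract_fixed_point d Hd Hnormal Hcompact
      (fun y => A0 y /\ inter_balls d G y) (fun y => E y /\ inter_balls d G y) T)
    as [e [[Ee Ge] Te]].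
  - apply admissible_in_inter; [exact HA0 | exact (admissible_inter_balls d G Gfam)].
  - exact HEG.
  - exact HT.
  - intros y [Ey Gy].
    split; [exact (TE y Ey) | exact (invariant_inter_balls d T G Hd HT Gfixed y Gy)].
  - apply (relative_retract_nonempty d _ _ HEG). exists x. auto.
  - exists e. auto.
Qed.

Section RetractChain.
Context {M : Type} (d : M -> M -> R).
Hypotheses (Hd : is_metric d) (Hnormal : metric_normal_structure d)
  (Hcompact : admissible_compact d).
Variables (A0 : M -> Prop) (C : (M -> Prop) -> Prop).
Hypotheses (HA0 : admissible_in d (fun _ => True) A0) (Hchain : chain C) (Cne : exists E, C E)
  (HC : forall E, C E -> relative_retract d A0 E).

Section Balls.
Variable G : M -> R -> Prop.
Hypotheses (Gfam : ball_family G) (Gcentres : forall c r, G c r -> bigcap C c)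
  (Gmeets : exists x, A0 x /\ inter_balls d G x).

Definition chain_piece (W : M -> Prop) : Prop :=
  admissible_in d (fun _ => True) W /\ included W A0 /\ included W (inter_balls d G) /\
  forall E, C E -> (exists y, W y /\ E y) /\ admissible_in d E W.

Lemma chain_piece_initial : chain_piece (fun x => A0 x /\ inter_balls d G x).
Proof.
  split; [| split; [| split]].
  - apply admissible_in_inter; [exact HA0 | exact (admissible_inter_balls d G Gfam)].
  - intros x [A0x _]. exact A0x.
  - intros x [_ Gx]. exact Gx.
  - intros E CE. destruct (HC E CE) as [EA0 HE].
    assert (G_in_E : forall c r, G c r -> E c) by (intros c r Gcr; exact (Gcentres c r Gcr E CE)).
    split.
    + destruct (HE G Gfam G_in_E Gmeets) as [e [Ee Ge]].
      exists e. split; [split; [exact (EA0 e Ee) | exact Ge] | exact Ee].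
    + apply (admissible_in_trace d E (inter_balls d G));
        [| exact (admissible_in_balls d E G Gfam G_in_E)].
      intros y Ey. split; [intros Gy; exact (conj (EA0 y Ey) Gy) | intros [_ Gy]; exact Gy].
Qed.

Lemma chain_piece_bigcap D :
  (forall W, D W -> chain_piece W) -> (exists W, D W) -> chain D -> chain_piece (bigcap D).
Proof.
  intros HD [W1 DW1] Dchain. destruct (HD W1 DW1) as [_ [W1A0 [W1G _]]].
  split; [| split; [| split]].
  - apply admissible_in_bigcap. intros W DW. exact (proj1 (HD W DW)).
  - intros y Hy. exact (W1A0 y (Hy W1 DW1)).
  - intros y Hy. exact (W1G y (Hy W1 DW1)).
  - intros E CE.
    assert (HDE : forall W, D W -> (exists y, W y /\ E y) /\ admissible_in d E W)
      by (intros W DW; exact (proj2 (proj2 (proj2 (HD W DW))) E CE)).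
    split.
    + destruct (chain_meets_relative_retract d A0 E D Hcompact HA0 (HC E CE) Dchain
        (ex_intro _ W1 DW1) HDE) as [e [Ee He]].
      exists e. auto.
    + apply admissible_in_bigcap. intros W DW. exact (proj2 (HDE W DW)).
Qed.

Section MinimalChainPiece.
Variable W : M -> Prop.
Hypotheses (HW : chain_piece W)
  (Wmin : forall Y, chain_piece Y -> included Y W -> included W Y).

Lemma minimal_chain_piece_hull E : C E -> included W (hull d E W).
Proof.
  intros CE.
  destruct HW as [W_adm [WA0 [WG WC]]].
  assert (HY : chain_piece (fun y => W y /\ hull d E W y)).
  { split; [| split; [| split]].
    - apply admissible_in_inter; [exact W_adm |].
      exact (admissible_hull d E W).
    - intros y [Wy _]. exact (WA0 y Wy).
    - intros y [Wy _]. exact (WG y Wy).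
    - intros E' CE'. destruct (WC E' CE') as [[p [Wp E'p]] W_adm'].
      destruct (Hchain E' E CE' CE) as [E'E | EE'].
      + split.
        * exists p. split; [| exact E'p].
          split; [exact Wp | exact (hull_subset d E W p Wp (E'E p E'p))].
        * apply (admissible_in_trace d E' W); [| exact W_adm'].
          intros y E'y. split; [| intros [Wy _]; exact Wy].
          intros Wy. exact (conj Wy (hull_subset d E W y Wy (E'E y E'y))).
      + destruct (WC E CE) as [[q [Wq Eq]] _]. split.
        * exists q. split; [| exact (EE' q Eq)].
          split; [exact Wq | exact (hull_subset d E W q Wq Eq)].
        * apply admissible_in_inter; [exact W_adm' |].
          apply admissible_in_balls; [apply ball_family_hull_balls |].
          intros c r [Ec _]. exact (EE' c Ec). }
  intros y Wy. exact (proj2 (Wmin _ HY (fun y h => proj1 h) y Wy)).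
Qed.

Lemma minimal_chain_piece_singleton x y : W x -> W y -> x = y.
Proof.
  intros Wx Wy. apply NNPP. intros xy.
  destruct (normal_structure_radius d W x y Hnormal (proj1 HW) Wx Wy xy)
    as [z [r [Wz [Hz [x' [y' [Wx' [Wy' Hr]]]]]]]].
  assert (r_ge0 : 0 <= r) by (rewrite <- (dist_self d Hd z); exact (Hz z Wz)).
  destruct HW as [W_adm [WA0 [WG WC]]].
  set (balls := fun c s => W c /\ s = r).
  assert (HY : chain_piece (fun w => W w /\ inter_balls d balls w)).
  { split; [| split; [| split]].
    - apply admissible_in_inter; [exact W_adm |].
      apply admissible_inter_balls. intros c s [_ ->]. exact r_ge0.
    - intros w [Ww _]. exact (WA0 w Ww).
    - intros w [Ww _]. exact (WG w Ww).
    - intros E CE. destruct (WC E CE) as [_ W_adm_E].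
      set (balls_E := fun c s => balls c s /\ E c).
      assert (balls_Efam : ball_family balls_E) by (intros c s [[_ ->] _]; exact r_ge0).
      (* on [E], testing against balls centred in [W ∩ E] suffices, since [W] lies in the
         hull of [W ∩ E] relative to [E] *)
      assert (trace : forall w, E w -> W w -> (inter_balls d balls w <-> inter_balls d balls_E w)).
      { intros w Ew Ww. split; [intros Hw c s [Hcs _]; exact (Hw c s Hcs) |].
        intros Hw c s [Wc ->]. unfold cball. rewrite dist_sym by exact Hd.
        apply (minimal_chain_piece_hull E CE c Wc).
        split; [exact Ew | split; [exact r_ge0 |]].
        intros v Wv Ev. rewrite dist_sym by exact Hd. exact (Hw v r (conj (conj Wv eq_refl) Ev)). }
      split.
      + destruct (proj2 (HC E CE) (fun c s => hull_balls d E W c s \/ balls_E c s)) as [e [Ee He]].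
        * intros c s [Hcs | Hcs];
            [exact (ball_family_hull_balls d E W c s Hcs) | exact (balls_Efam c s Hcs)].
        * intros c s [[Ec _] | [_ Ec]]; exact Ec.
        * exists z. split; [exact (WA0 z Wz) | apply inter_balls_or; split].
          -- exact (minimal_chain_piece_hull E CE z Wz).
          -- intros c s [[Wc ->] _]. unfold cball. rewrite dist_sym by exact Hd. exact (Hz c Wc).
        * apply inter_balls_or in He. destruct He as [He_hull He_balls].
          assert (We : W e) by exact (W_adm_E e Ee He_hull).
          exists e. split; [split; [exact We | exact (proj2 (trace e Ee We) He_balls)] | exact Ee].
      + apply (admissible_in_trace d E (fun w => W w /\ inter_balls d balls_E w)).
        * intros w Ew. split; intros [Ww Hw]; split; try exact Ww; apply (trace w Ew Ww); exact Hw.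
        * apply admissible_in_inter; [exact W_adm_E |].
          apply admissible_in_balls; [exact balls_Efam | intros c s [_ Ec]; exact Ec]. }
  assert (Hdiam : d y' x' <= r)
    by exact (proj2 (Wmin _ HY (fun w h => proj1 h) x' Wx') y' r (conj Wy' eq_refl)).
  rewrite dist_sym in Hdiam by exact Hd. lra.
Qed.

End MinimalChainPiece.

Lemma chain_meets_balls : exists e, bigcap C e /\ inter_balls d G e.
Proof.
  destruct (zorn_minimal chain_piece _ chain_piece_initial chain_piece_bigcap) as [W [HW Wmin]].
  destruct Cne as [E0 CE0].
  destruct (proj1 (proj2 (proj2 (proj2 HW)) E0 CE0)) as [w [Ww _]].
  exists w. split; [| exact (proj1 (proj2 (proj2 HW)) w Ww)].
  intros E CE. destruct (proj1 (proj2 (proj2 (proj2 HW)) E CE)) as [y [Wy Ey]].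
  rewrite (minimal_chain_piece_singleton W HW Wmin w y Ww Wy). exact Ey.
Qed.

End Balls.

Lemma relative_retract_bigcap : relative_retract d A0 (bigcap C).
Proof.
  split.
  - destruct Cne as [E0 CE0]. intros x Hx. exact (proj1 (HC E0 CE0) x (Hx E0 CE0)).
  - intros G Gfam Gcentres Gmeets. exact (chain_meets_balls G Gfam Gcentres Gmeets).
Qed.

End RetractChain.

Lemma common_fixed_point_in_admissible {M : Type} (d : M -> M -> R) (I : Type)
    (T : I -> M -> M) (A0 : M -> Prop) :
  is_metric d -> metric_normal_structure d -> admissible_compact d ->
  (forall i, orbit_nonexpansive d (T i)) -> (forall i j x, T i (T j x) = T j (T i x)) ->
  admissible_in d (fun _ => True) A0 -> (exists x, A0 x) -> (forall i, invariant (T i) A0) ->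
  exists x, A0 x /\ forall i, T i x = x.
Proof.
  intros Hd Hnormal Hcompact HT Tcomm HA0 A0ne TA0.
  set (P := fun E => relative_retract d A0 E /\ forall i, invariant (T i) E).
  destruct (zorn_minimal P A0) as [E [[HE TE] Emin]].
  - split; [exact (relative_retract_refl d A0) | exact TA0].
  - intros C HC Cne Hchain. split.
    + apply (relative_retract_bigcap d Hd Hnormal Hcompact A0 C HA0 Hchain Cne).
      intros E CE. exact (proj1 (HC E CE)).
    + intros i y Hy E CE. exact (proj2 (HC E CE) i y (Hy E CE)).
  - (* by commutativity, the fixed points of [T i] in [E] form a smaller member of [P] *)
    assert (E_fixed : forall i y, E y -> T i y = y).
    { intros i. apply (Emin (fun y => E y /\ T i y = y)); [split | intros y [Ey _]; exact Ey].
      - exact (relative_retract_fixed_points d A0 E (T i) Hd Hnormal Hcompact HA0 HE (HT i) (TE i)).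
      - intros j y [Ey Ty]. split; [exact (TE j y Ey) | rewrite Tcomm, Ty; reflexivity]. }
    destruct (relative_retract_nonempty d A0 E HE A0ne) as [e Ee].
    exists e. split; [exact (proj1 HE e Ee) | intros i; exact (E_fixed i e Ee)].
Qed.

Theorem corollary3p8 (M : Type) (d : M -> M -> R) (I : Type) (T : I -> M -> M) :
  inhabited M ->
  is_metric d ->
  bounded_metric d ->
  metric_normal_structure d ->
  admissible_compact d ->
  (forall i, orbit_nonexpansive d (T i)) ->
  (forall i j x, T i (T j x) = T j (T i x)) ->
  (exists x, forall i, T i x = x) /\
  one_local_retract d (fun x => forall i, T i x = x).
Proof.
  intros [m] Hd _ Hnormal Hcompact HT Tcomm. split.
  - destruct (common_fixed_point_in_admissible d I T (fun _ => True) Hd Hnormal Hcompact HT Tcomm)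
      as [x [_ Hx]].
    + intros y _ _. trivial.
    + exists m. trivial.
    + intros i y _. trivial.
    + exists x. exact Hx.
  - intros B Bfam Bcentres [x Bx].
    destruct (common_fixed_point_in_admissible d I T (inter_balls d B) Hd Hnormal Hcompact HT Tcomm)
      as [e Be].
    + exact (admissible_inter_balls d B Bfam).
    + exists x. exact Bx.
    + intros i. apply (invariant_inter_balls d (T i) B Hd (HT i)).
      intros c r Bcr. exact (Bcentres c r Bcr i).
    + exists e. tauto.
Qed.
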